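(* Let $n\ge 2$. For $a\in\mathbb{R}^{n-1}$ and $\rho>0$ let $$B(a,\rho)=\begin{pmatrix} I & -a\\ -a^T & a^Ta-\rho^2\end{pmatrix}\in\mathbb{S}^n,$$ where $I$ is the $(n-1)\times(n-1)$ identity. Let $G\subseteq\mathbb{Z}^{n-1}\times(0,1/2]$ be such that $a_1\neq a_2$ for every pair of distinct $(a_1,\rho_1),(a_2,\rho_2)\in G$. Then $B(a_1,\rho_1)+B(a_2,\rho_2)\in\mathbb{S}^n_+$ for every distinct $(a_1,\rho_1),(a_2,\rho_2)\in G$; in particular $\mathcal{B}(G)=\{B(a,\rho):(a,\rho)\in G\}$ satisfies Condition (D).
   Context: $\mathbb{S}^n$ denotes the space of real $n\times n$ symmetric matrices and $\mathbb{S}^n_+$ its cone of positive semidefinite matrices. A set $\mathcal{B}\subseteq\mathbb{S}^n$ satisfies Condition (D) if there exist $\alpha_B>0$ $(B\in\mathcal{B})$ with $\alpha_AA+\alpha_BB\in\mathbb{S}^n_+$ for every distinct pair $A,B\in\mathcal{B}$. *)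

From HB Require Import structures.
From mathcomp Require Import all_boot all_order all_algebra.
Set Implicit Arguments. Unset Strict Implicit. Unset Printing Implicit Defensive.
Import Order.TTheory GRing.Theory Num.Theory.
Local Open Scope ring_scope.

Definition psd (R : realFieldType) (N : nat) (A : 'M[R]_N) : Prop :=
  A^T = A /\ forall x : 'cV[R]_N, 0 <= (x^T *m A *m x) 0 0.

Definition conditionD (R : realFieldType) (N : nat) (Bs : 'M[R]_N -> Prop) : Prop :=
  exists alpha : 'M[R]_N -> R,
    (forall B, Bs B -> 0 < alpha B) /\
    (forall A B, Bs A -> Bs B -> A <> B -> psd (alpha A *: A + alpha B *: B)).

Definition Bmat (R : realFieldType) (k : nat) (a : 'cV[int]_k) (rho : R)
  : 'M[R]_(k + 1) :=
  let ar := map_mx (fun z : int => z%:~R) a in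
  block_mx 1%:M (- ar) (- ar^T) (ar^T *m ar - (rho ^+ 2)%:M).

Definition BG (R : realFieldType) (k : nat) (G : 'cV[int]_k * R -> Prop)
  : 'M[R]_(k + 1) -> Prop :=
  fun M => exists p, G p /\ M = Bmat p.1 p.2.

From HB Require Import structures.
From mathcomp Require Import all_boot all_order all_algebra ring lra zify.
Import Order.TTheory GRing.Theory Num.Theory.
Local Open Scope ring_scope.

(* Write b_i for the real image of a_i.  The sum B(a1, r1) + B(a2, r2) is the
   Gram-type combination 2 M^T M + delta E^T E with M = [I | -(b1 + b2)/2],
   E = [0 | 1] and delta = |b1 - b2|^2 / 2 - r1^2 - r2^2 (complete the square in
   the quadratic form).  Gram matrices are positive semidefinite, and delta >= 0
   because distinct integer vectors are at squared distance at least 1 while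
   r1^2 + r2^2 <= 1/2.  Condition (D) then holds with all weights equal to 1. *)

Lemma dotmx_self_ge0 (R : realFieldType) k (u : 'cV[R]_k) : 0 <= (u^T *m u) 0 0.
Proof. by rewrite mxE sumr_ge0 // => i _; rewrite mxE -expr2 sqr_ge0. Qed.

Section Psd.
Variables (R : realFieldType) (N : nat).
Implicit Types (A B : 'M[R]_N).

Lemma psdD A B : psd A -> psd B -> psd (A + B).
Proof.
move=> [symA A_ge0] [symB B_ge0]; split; first by rewrite linearD /= symA symB.
by move=> x; rewrite mulmxDr mulmxDl mxE addr_ge0.
Qed.

Lemma psdZ (c : R) A : 0 <= c -> psd A -> psd (c *: A).
Proof.
move=> c_ge0 [symA A_ge0]; split; first by rewrite linearZ /= symA.
by move=> x; rewrite -scalemxAr -scalemxAl mxE mulr_ge0.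
Qed.

Lemma psd_gram m (M : 'M[R]_(m, N)) : psd (M^T *m M).
Proof.
split; first by rewrite trmx_mul trmxK.
by move=> x; rewrite mulmxA -trmx_mul -mulmxA; apply: dotmx_self_ge0.
Qed.

End Psd.

Notation intmx := (map_mx (fun z : int => z%:~R)).

Section BmatSum.
Variables (R : realFieldType) (k : nat) (a1 a2 : 'cV[int]_k) (r1 r2 : R).
Let b1 : 'cV[R]_k := intmx a1.
Let b2 : 'cV[R]_k := intmx a2.

Lemma Bmat_add_gram :
  let M := row_mx 1%:M (- (2^-1 *: (b1 + b2))) in
  let E := row_mx (0 : 'rV[R]_k) 1 in
  Bmat a1 r1 + Bmat a2 r2 = 2 *: (M^T *m M)
    + (((b1 - b2)^T *m (b1 - b2)) 0 0 / 2 - r1 ^+ 2 - r2 ^+ 2) *: (E^T *m E).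
Proof.
rewrite /Bmat /= add_block_mx !tr_row_mx !mul_col_row !scale_block_mx add_block_mx.
congr block_mx.
- by rewrite trmx1 mulmx1 trmx0 mul0mx scaler0 addr0 scaler_nat mulr2n.
- rewrite trmx1 mul1mx trmx0 mul0mx scaler0 addr0 scalerN scalerA.
  by rewrite divff ?pnatr_eq0 // scale1r opprD.
- rewrite trmx1 mulmx1 mulmx0 scaler0 addr0 linearN /= linearZ /= scalerN.
  by rewrite scalerA divff ?pnatr_eq0 // scale1r linearD opprD.
- rewrite -/b1 -/b2 trmx1 mulmx1 [(- _)^T]linearN /= mulNmx mulmxN opprK.
  rewrite [(_ *: _)^T]linearZ /= -scalemxAl -scalemxAr.
  rewrite [(_ + _)^T]linearD [(_ - _)^T]linearB /= !mulmxDl !mulmxDr.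
  rewrite !mulmxN !mulNmx opprK.
  have sym21 : b2^T *m b1 = b1^T *m b2.
    apply/matrixP => i j; rewrite !ord1 !mxE.
    by apply: eq_bigr => l _; rewrite !mxE mulrC.
  rewrite sym21; apply/matrixP => i j; rewrite !ord1 !mxE /=.
  by field.
Qed.
End BmatSum.

Lemma dotmx_self_int_ge1 (R : realFieldType) {k} (d : 'cV[int]_k) :
  d != 0 -> 1 <= ((intmx d)^T *m intmx d) 0 0 :> R.
Proof.
move=> d_neq0; have [i di_neq0] : exists i, d i 0 != 0.
  apply/existsP; apply: contraR d_neq0 => /existsPn d0.
  by apply/eqP/matrixP => i j; rewrite ord1 mxE; apply/eqP/negbNE/d0.
rewrite map_trmx -map_mxM mxE ler1z mxE (bigD1 i) //= -[1]addr0 lerD //.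
  by rewrite mxE; nia.
by apply: sumr_ge0 => l _; rewrite mxE -expr2 sqr_ge0.
Qed.

Lemma psd_Bmat_add (R : realFieldType) k (a1 a2 : 'cV[int]_k) (r1 r2 : R) :
  a1 != a2 -> r1 ^+ 2 + r2 ^+ 2 <= 2^-1 -> psd (Bmat a1 r1 + Bmat a2 r2).
Proof.
move=> a12 r_small; rewrite Bmat_add_gram.
apply: psdD; (apply: psdZ; last exact: psd_gram); first by [].
have := dotmx_self_int_ge1 R (a1 - a2); rewrite subr_eq0 => /(_ a12).
rewrite -map_mxB; lra.
Qed.

Lemma conditionD_pairwise_add (R : realFieldType) N (Bs : 'M[R]_N -> Prop) :
  (forall A B, Bs A -> Bs B -> A <> B -> psd (A + B)) -> conditionD Bs.
Proof.
move=> Bs_psd; exists (fun=> 1); split=> [_ _ | A B BsA BsB AB]; first exact: ltr01.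
by rewrite !scale1r; apply: Bs_psd.
Qed.

Theorem mainTheorem3 (R : realFieldType) (n : nat) (hn : (2 <= n)%N)
  (G : 'cV[int]_(n.-1) * R -> Prop)
  (hG : forall p, G p -> 0 < p.2 <= 1 / 2)
  (hinj : forall p q, G p -> G q -> p <> q -> p.1 <> q.1) :
  (forall p q, G p -> G q -> p <> q -> psd (Bmat p.1 p.2 + Bmat q.1 q.2))
  /\ conditionD (BG G).
Proof.
have pair_psd p q : G p -> G q -> p <> q -> psd (Bmat p.1 p.2 + Bmat q.1 q.2).
  move=> Gp Gq pq; apply: psd_Bmat_add; first exact/eqP/hinj.
  by case/andP: (hG p Gp) => ? ?; case/andP: (hG q Gq) => ? ?; nra.
split=> //; apply: conditionD_pairwise_add => _ _ [p [Gp ->]] [q [Gq ->]] Bpq.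
by apply: pair_psd => // pq; apply: Bpq; rewrite pq.
Qed.
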